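(* Let $(A,B)$ be a $B$-irreducible odd-symmetric non-simple associative superalgebra such that $A_{\bar{0}}$ is a semi-simple associative algebra. Then $A\cong S\oplus P(S^* )$ is the semi-direct product of a simple associative algebra $S$ by $P(S^* )$ by means of $(L^*,R^* )$.
   Context: $\mathbb{K}$ algebraically closed of characteristic zero; finite dimensional associative superalgebras $A=A_{\bar{0}}\oplus A_{\bar{1}}$. An odd-symmetric structure is an odd (i.e. $B(A_{\bar{0}},A_{\bar{0}})=B(A_{\bar{1}},A_{\bar{1}})=\{0\}$), supersymmetric, associative ($B(xy,z)=B(x,yz)$), non-degenerate bilinear form $B$. $(A,B)$ is $B$-irreducible if $A$ contains no non-degenerate graded two-sided ideal other than $\{0\}$ and $A$. For an associative algebra $S$, $P(S^* )$ is the graded space with $P(S^* )_{\bar{0}}=\{0\}$, $P(S^* )_{\bar{1}}=S^*$; the semi-direct product $S\oplus P(S^* )$ has product $(x+f)(y+h)=xy+h\circ R_x+f\circ L_y$ ($L,R$ left/right multiplications in $S$, i.e. $L^*(x)(h)=h\circ R_x$, $R^*(y)(f)=f\circ L_y$) and odd-symmetric form $\widetilde{B}(f,x)=\widetilde{B}(x,f)=f(x)$, $\widetilde{B}(S,S)=\widetilde{B}(P(S^* ),P(S^* ))=\{0\}$. *)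

From HB Require Import structures.
From mathcomp Require Import all_boot all_order all_algebra.
Set Implicit Arguments. Unset Strict Implicit. Unset Printing Implicit Defensive.
Import GRing.Theory.
Local Open Scope ring_scope.

Section SuperDefs.
Variable K : fieldType.

Definition bilin_map (V : vectType K) (m : V -> V -> V) :=
  forall (a : K) (x y z : V),
    m (a *: x + y) z = a *: m x z + m y z /\ m z (a *: x + y) = a *: m z x + m z y.

Definition bilin_form (V : vectType K) (B : V -> V -> K) :=
  forall (a : K) (x y z : V),
    B (a *: x + y) z = a * B x z + B y z /\ B z (a *: x + y) = a * B z x + B z y.

(* homogeneous component of degree b (false = even, true = odd) *)
Definition homog (V : vectType K) (A0 A1 : {vspace V}) (b : bool) :=
  if b then A1 else A0.

Definition assoc_superalgebra (V : vectType K) (m : V -> V -> V)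
    (A0 A1 : {vspace V}) :=
  [/\ bilin_map m, directv (A0 + A1), (A0 + A1)%VS = fullv,
      (forall (b c : bool) (x y : V), x \in homog A0 A1 b -> y \in homog A0 A1 c ->
          m x y \in homog A0 A1 (b (+) c))
    & (forall x y z : V, m (m x y) z = m x (m y z))].

Definition graded_ideal (V : vectType K) (m : V -> V -> V) (A0 A1 : {vspace V})
    (I : {vspace V}) :=
  I = (I :&: A0 + I :&: A1)%VS /\
  (forall x y : V, y \in I -> m x y \in I /\ m y x \in I).

Definition super_simple (V : vectType K) (m : V -> V -> V) (A0 A1 : {vspace V}) :=
  (exists x y : V, m x y != 0) /\
  (forall I : {vspace V}, graded_ideal m A0 A1 I -> I = 0%VS \/ I = fullv).

(* odd-symmetric structure: odd, supersymmetric, associative, non-degenerate *)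
Definition odd_symmetric (V : vectType K) (m : V -> V -> V) (A0 A1 : {vspace V})
    (B : V -> V -> K) :=
  [/\ bilin_form B,
      ((forall x y : V, x \in A0 -> y \in A0 -> B x y = 0) /\
       (forall x y : V, x \in A1 -> y \in A1 -> B x y = 0)),
      (forall (b c : bool) (x y : V), x \in homog A0 A1 b -> y \in homog A0 A1 c ->
          B x y = (-1) ^+ (b && c) * B y x),
      (forall x y z : V, B (m x y) z = B x (m y z))
    & (forall x : V, (forall y : V, B x y = 0) -> x = 0)].

Definition nondeg_on (V : vectType K) (B : V -> V -> K) (I : {vspace V}) :=
  forall x : V, x \in I -> (forall y : V, y \in I -> B x y = 0) -> x = 0.

Definition B_irreducible (V : vectType K) (m : V -> V -> V) (A0 A1 : {vspace V})
    (B : V -> V -> K) :=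
  forall I : {vspace V}, graded_ideal m A0 A1 I -> nondeg_on B I ->
    I = 0%VS \/ I = fullv.

Definition ideal_in (V : vectType K) (m : V -> V -> V) (U J : {vspace V}) :=
  (J <= U)%VS /\
  (forall x y : V, x \in U -> y \in J -> m x y \in J /\ m y x \in J).

Definition nilpotent_sp (V : vectType K) (m : V -> V -> V) (J : {vspace V}) :=
  exists n : nat, forall (x : V) (s : seq V), x \in J -> all (fun y => y \in J) s ->
    size s = n -> foldl m x s = 0.

(* U is a subalgebra which is a semi-simple associative algebra
   (no non-zero nilpotent two-sided ideal, i.e. zero radical) *)
Definition semisimple_sub (V : vectType K) (m : V -> V -> V) (U : {vspace V}) :=
  (forall x y : V, x \in U -> y \in U -> m x y \in U) /\
  (forall J : {vspace V}, ideal_in m U J -> nilpotent_sp m J -> J = 0%VS).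

Definition simple_assoc_alg (W : vectType K) (m : W -> W -> W) :=
  [/\ bilin_map m, (forall x y z : W, m (m x y) z = m x (m y z)),
      (exists x y : W, m x y != 0)
    & (forall J : {vspace W}, ideal_in m fullv J -> J = 0%VS \/ J = fullv)].

(* the semi-direct product S (+) P(S^* ), with S^* = 'Hom(S, K) :
   (x + f)(y + h) = xy + h o R_x + f o L_y *)
Definition sd_mul (W : vectType K) (m : W -> W -> W)
    (u v : W * 'Hom(W, K^o)) : W * 'Hom(W, K^o) :=
  (m u.1 v.1, linfun (fun z : W => (v.2 (m z u.1) + u.2 (m v.1 z) : K^o))).

End SuperDefs.

From HB Require Import structures.
From mathcomp Require Import all_boot all_order all_algebra.
From mathcomp Require Import zify.
Import GRing.Theory.
Local Open Scope ring_scope.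

Set Implicit Arguments.
Unset Strict Implicit.
Unset Printing Implicit Defensive.

(* Since A0 is a finite-dimensional algebra without nilpotent ideals, every
   ideal J of A0 has a unit element: an idempotent e of J is enlarged by a
   non-zero idempotent of the Peirce corner (1 - e) J (1 - e), found by
   Fitting's lemma, until that corner vanishes, and then e is a unit of J.
   As B pairs A0 non-degenerately with A1, such a unit is central in A, so eA
   is a non-degenerate graded ideal; B-irreducibility forces e = 0 or e = 1,
   hence A0 is simple.  If A is not simple, a proper graded ideal I has a
   non-zero isotropic part I :&: I^perp, an ideal of square zero which must
   lie in A1, and this forces A1 A1 = 0.  Then v |-> (v0, B(-, v1)) is an
   isomorphism from A onto A0 (+) P(A0^* ), bijective because B identifies A1
   with the dual of A0. *)

Lemma lfunE_linear (K : fieldType) (aT rT : vectType K) (f : aT -> rT) :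
  linear f -> forall x, linfun f x = f x.
Proof.
move=> fL x.
pose F : {linear aT -> rT} := HB.pack f (GRing.isLinear.Build K aT rT *:%R f fL).
exact: (lfunE F x).
Qed.

Section BilinearMaps.
Variables (K : fieldType) (U W : lmodType K) (f : U -> U -> W).
Hypothesis f_bilin : forall (a : K) (x y z : U),
  f (a *: x + y) z = a *: f x z + f y z /\ f z (a *: x + y) = a *: f z x + f z y.

Lemma bilin_linl z : linear (f^~ z).
Proof. by move=> a x y; case: (f_bilin a x y z). Qed.

Lemma bilin_linr z : linear (f z).
Proof. by move=> a x y; case: (f_bilin a x y z). Qed.

Lemma bilin0l z : f 0 z = 0.
Proof.
have := bilin_linl z 1 0 0; rewrite !scale1r addr0 => h.
by apply: (addrI (f 0 z)); rewrite -h addr0.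
Qed.

Lemma bilin0r z : f z 0 = 0.
Proof.
have := bilin_linr z 1 0 0; rewrite !scale1r addr0 => h.
by apply: (addrI (f z 0)); rewrite -h addr0.
Qed.

Lemma bilinDl x y z : f (x + y) z = f x z + f y z.
Proof. by have := (f_bilin 1 x y z).1; rewrite !scale1r. Qed.

Lemma bilinDr x y z : f z (x + y) = f z x + f z y.
Proof. by have := (f_bilin 1 x y z).2; rewrite !scale1r. Qed.

Lemma bilinZl a x z : f (a *: x) z = a *: f x z.
Proof. by have := (f_bilin a x 0 z).1; rewrite !addr0 bilin0l addr0. Qed.

Lemma bilinZr a x z : f z (a *: x) = a *: f z x.
Proof. by have := (f_bilin a x 0 z).2; rewrite !addr0 bilin0r addr0. Qed.

Lemma bilinBl x y z : f (x - y) z = f x z - f y z.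
Proof. by rewrite bilinDl -scaleN1r bilinZl scaleN1r. Qed.

Lemma bilinBr x y z : f z (x - y) = f z x - f z y.
Proof. by rewrite bilinDr -scaleN1r bilinZr scaleN1r. Qed.

End BilinearMaps.

Lemma limg_chain_stable (K : fieldType) (V : vectType K) (f : 'End(V)) (S : nat -> {vspace V}) :
  (forall k, S k.+1 = (f @: S k)%VS) -> (S 1%N <= S 0%N)%VS ->
  exists N, forall k, (N <= k)%N -> S k = S N.
Proof.
move=> Sf S10.
have decS k : (S k.+1 <= S k)%VS by elim: k => // k IH; rewrite (Sf k.+1) {2}(Sf k) limgS.
have [N SN] : exists N, S N.+1 = S N.
  case/boolP: [exists i : 'I_(\dim (S 0%N)).+1, S i.+1 == S i] => [/existsP [i /eqP]|].
    by exists i.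
  rewrite negb_exists => /forallP neS.
  have dimS k : (k <= (\dim (S 0%N)).+1)%N -> (\dim (S k) + k <= \dim (S 0%N))%N.
    elim: k => [|k IH] lek; first by rewrite addn0.
    have := neS (Ordinal lek); rewrite -(ltn_leqif (dimv_leqif_eq (decS k))).
    by have := IH (ltnW lek); lia.
  by have := dimS _ (leqnn _); lia.
exists N => k /subnK <-; elim: (k - N)%N => // d IH.
by rewrite addSn Sf IH -Sf SN.
Qed.

Section Algebra.
Variables (K : fieldType) (V : vectType K) (mul : V -> V -> V).
Hypothesis mul_bilin : bilin_map mul.
Hypothesis mulA : forall x y z, mul (mul x y) z = mul x (mul y z).

Local Notation "x ∙ y" := (mul x y) (at level 40, left associativity).

Lemma amul0l z : 0 ∙ z = 0. Proof. exact: bilin0l. Qed.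
Lemma amul0r z : z ∙ 0 = 0. Proof. exact: bilin0r. Qed.
Lemma amulDl x y z : (x + y) ∙ z = x ∙ z + y ∙ z. Proof. exact: bilinDl. Qed.
Lemma amulDr x y z : z ∙ (x + y) = z ∙ x + z ∙ y. Proof. exact: bilinDr. Qed.
Lemma amulZl a x z : (a *: x) ∙ z = a *: (x ∙ z). Proof. exact: bilinZl. Qed.
Lemma amulZr a x z : z ∙ (a *: x) = a *: (z ∙ x). Proof. exact: bilinZr. Qed.
Lemma amulBl x y z : (x - y) ∙ z = x ∙ z - y ∙ z. Proof. exact: bilinBl. Qed.
Lemma amulBr x y z : z ∙ (x - y) = z ∙ x - z ∙ y. Proof. exact: bilinBr. Qed.

Definition lmul u : 'End(V) := linfun (mul u).
Definition rmul u : 'End(V) := linfun (mul^~ u).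

Lemma lmulE u x : lmul u x = u ∙ x.
Proof. exact/lfunE_linear/bilin_linr. Qed.

Lemma rmulE u x : rmul u x = x ∙ u.
Proof. exact/lfunE_linear/bilin_linl. Qed.

Definition prodv (X Y : {vspace V}) : {vspace V} :=
  (\sum_(i < \dim X) lmul (vbasis X)`_i @: Y)%VS.

Lemma memv_prodv (X Y : {vspace V}) x y : x \in X -> y \in Y -> x ∙ y \in prodv X Y.
Proof.
move=> /coord_vbasis -> Yy; rewrite -rmulE linear_sum /=.
by apply: memv_sumr => i _; rewrite linearZ /= rmulE memvZ // -lmulE memv_img.
Qed.

Lemma prodv_sub (X Y Z : {vspace V}) :
  (forall x y, x \in X -> y \in Y -> x ∙ y \in Z) -> (prodv X Y <= Z)%VS.
Proof.
move=> XYZ; apply/subv_sumP => i _; apply/subvP => _ /memv_imgP [y Yy ->].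
by rewrite lmulE XYZ // vbasis_mem // mem_nth // size_tuple.
Qed.

Lemma prodv_lfun_mem (f : 'End(V)) (X Y Z : {vspace V}) :
  (forall x y, x \in X -> y \in Y -> f (x ∙ y) \in Z) ->
  forall z, z \in prodv X Y -> f z \in Z.
Proof.
move=> fXYZ z; rewrite memv_preim; move: z; apply/subvP.
by apply: prodv_sub => x y Xx Yy; rewrite -memv_preim fXYZ.
Qed.

Lemma prodv_lfun0 (f : 'End(V)) (X Y : {vspace V}) :
  (forall x y, x \in X -> y \in Y -> f (x ∙ y) = 0) ->
  forall z, z \in prodv X Y -> f z = 0.
Proof.
move=> fXY0 z Zz; apply/eqP; rewrite -memv0; move: z Zz; apply: prodv_lfun_mem.
by move=> x y Xx Yy; rewrite fXY0 ?mem0v.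
Qed.

(* Fitting: the chains t^k C and C t^k stabilise, so g = t^(N+1) satisfies
   g = g^2 c = c' g^2, and then g c = c' g is idempotent. *)
Lemma idempotent_of_fixpoint (C : {vspace V}) t w :
  (forall x y, x \in C -> y \in C -> x ∙ y \in C) -> t \in C -> t ∙ w = w -> w != 0 ->
  exists2 e, e \in C & e ∙ e = e /\ e != 0.
Proof.
move=> mulC Ct tw w0.
pose pw k := iter k (mul t) t. (* t^(k+1) *)
have pwD i j : pw i ∙ pw j = pw (i + j).+1 by elim: i => //= i IH; rewrite mulA IH.
have pwSr k : pw k.+1 = pw k ∙ t by rewrite (pwD k 0) addn0.
have pwC k : pw k \in C by elim: k => //= k IH; exact: mulC.
have pw_w k : pw k ∙ w = w by elim: k => //= k IH; rewrite mulA IH.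
pose Sl k := (lmul (pw k) @: C)%VS; pose Sr k := (rmul (pw k) @: C)%VS.
have [Nl Sl_st] : exists N, forall k, (N <= k)%N -> Sl k = Sl N.
  apply: (limg_chain_stable (f := lmul t)) => [k|].
    by rewrite -limg_comp; congr (_ @: _)%VS; apply/lfunP => x; rewrite comp_lfunE !lmulE mulA.
  rewrite /Sl -[pw 1]/(t ∙ t); apply/subvP => _ /memv_imgP [c Cc ->].
  by rewrite lmulE mulA -[t ∙ (t ∙ c)]lmulE memv_img // mulC.
have [Nr Sr_st] : exists N, forall k, (N <= k)%N -> Sr k = Sr N.
  apply: (limg_chain_stable (f := rmul t)) => [k|].
    by rewrite -limg_comp; congr (_ @: _)%VS; apply/lfunP => x; rewrite comp_lfunE !rmulE pwSr mulA.
  rewrite /Sr -[pw 1]/(t ∙ t); apply/subvP => _ /memv_imgP [c Cc ->].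
  by rewrite rmulE -mulA -[c ∙ t ∙ t]rmulE memv_img // mulC.
pose N := maxn Nl Nr; pose g := pw N.+1.
have gg : g ∙ g = pw (N.+1 + N.+1).+1 by rewrite pwD.
have Sl_gg : Sl N = Sl (N.+1 + N.+1).+1.
  by rewrite Sl_st ?(Sl_st (N.+1 + _).+1) // /N; lia.
have Sr_gg : Sr N = Sr (N.+1 + N.+1).+1.
  by rewrite Sr_st ?(Sr_st (N.+1 + _).+1) // /N; lia.
have : g \in Sl N by rewrite /g pwSr -lmulE memv_img.
rewrite Sl_gg /Sl -gg => /memv_imgP [c Cc]; rewrite lmulE => gE.
have : g \in Sr N by rewrite /g -[pw N.+1]/(t ∙ pw N) -rmulE memv_img.
rewrite Sr_gg /Sr -gg => /memv_imgP [c' C'c]; rewrite rmulE => gE'.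
have eE : c' ∙ g = g ∙ c by rewrite {1}gE -mulA -gE'.
exists (g ∙ c); first by rewrite mulC // pwC.
split; first by rewrite -{1}eE mulA -[g ∙ (g ∙ c)]mulA -gE eE.
apply: contraNneq w0 => gc0.
have gE2 : g = g ∙ (g ∙ c) by rewrite -mulA -gE.
by rewrite -(pw_w N.+1) -/g gE2 gc0 amul0r amul0l.
Qed.

(** * Units of ideals in semiprime algebras *)

Section Semiprime.
Variable U : {vspace V}.
Hypothesis U_semisimple : semisimple_sub mul U.

Lemma mulU x y : x \in U -> y \in U -> x ∙ y \in U.
Proof. exact: U_semisimple.1. Qed.

Lemma sq0_ideal0 J : ideal_in mul U J ->
  (forall x y, x \in J -> y \in J -> x ∙ y = 0) -> J = 0%VS.
Proof.
move=> J_ideal JJ0; apply: U_semisimple.2 => //; exists 1%N => x [|y []] //= Jx.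
by rewrite andbT => Jy _; exact: JJ0.
Qed.

Lemma sq0_left_ideal0 L : (L <= U)%VS ->
  (forall u l, u \in U -> l \in L -> u ∙ l \in L) ->
  (forall x y, x \in L -> y \in L -> x ∙ y = 0) -> L = 0%VS.
Proof.
(* L U is a two-sided ideal of square zero; once it vanishes, so does L. *)
move=> sLU L_left LL0; pose LU := prodv L U.
have LU_L0 z l : z \in LU -> l \in L -> z ∙ l = 0.
  move=> LUz Ll; rewrite -rmulE; move: z LUz; apply: prodv_lfun0 => x u Lx Uu.
  by rewrite rmulE mulA LL0 ?L_left.
have LU0 : LU = 0%VS.
  apply: sq0_ideal0 => [|x y LUx]; last first.
    rewrite -lmulE; apply: prodv_lfun0 => l u Ll Uu.
    by rewrite lmulE -mulA (LU_L0 x l) ?amul0l.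
  split=> [|u z Uu LUz]; first by apply: prodv_sub => l v /(subvP sLU) Ul Uv; exact: mulU.
  rewrite -lmulE -[z ∙ u]rmulE; split; move: z LUz; apply: prodv_lfun_mem => l v Ll Uv.
    by rewrite lmulE -mulA memv_prodv ?L_left.
  by rewrite rmulE mulA memv_prodv ?mulU.
have LU_0 l u : l \in L -> u \in U -> l ∙ u = 0.
  by move=> Ll Uu; apply/eqP; rewrite -memv0 -LU0 memv_prodv.
apply: sq0_ideal0 => //; split=> // u l Uu Ll.
by rewrite L_left // LU_0 ?mem0v.
Qed.

Lemma sandwich0 q : q \in U -> q ∙ q = 0 ->
  (forall x, x \in U -> q ∙ x ∙ q = 0) -> q = 0.
Proof.
move=> Uq qq0 qUq0; pose L := (<[q]> + rmul q @: U)%VS.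
have qL0 y : y \in L -> q ∙ y = 0.
  case/memv_addP => _ /vlineP [k ->] [_ /memv_imgP [u Uu ->] ->].
  by rewrite rmulE amulDr amulZr qq0 -mulA qUq0 // scaler0 add0r.
have L0 : L = 0%VS.
  apply: sq0_left_ideal0 => [|u l Uu|x y].
  - rewrite subv_add -memvE Uq; apply/subvP => _ /memv_imgP [u Uu ->].
    by rewrite rmulE mulU.
  - case/memv_addP => _ /vlineP [k ->] [_ /memv_imgP [v Uv ->] ->].
    rewrite rmulE amulDr amulZr -mulA; apply/(subvP (addvSr _ _)).
    by rewrite memvD ?memvZ // -rmulE memv_img // mulU.
  case/memv_addP => _ /vlineP [k ->] [_ /memv_imgP [u Uu ->] ->] Ly.
  by rewrite rmulE amulDl amulZl mulA !qL0 // amul0r scaler0 addr0.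
by apply/eqP; rewrite -memv0 -L0 (subvP (addvSl _ _)) ?memv_line.
Qed.

Section IdealUnit.
Variable J : {vspace V}.
Hypothesis J_ideal : ideal_in mul U J.

Lemma ideal_sub x : x \in J -> x \in U.
Proof. exact: (subvP J_ideal.1). Qed.

Lemma ideal_mull x j : x \in U -> j \in J -> x ∙ j \in J.
Proof. by move=> Ux Jj; case: (J_ideal.2 x j Ux Jj). Qed.

Lemma ideal_mulr x j : x \in U -> j \in J -> j ∙ x \in J.
Proof. by move=> Ux Jj; case: (J_ideal.2 x j Ux Jj). Qed.

Section Corner.
Variable e : V.
Hypotheses (Je : e \in J) (ee : e ∙ e = e).

Lemma idemKl z : e ∙ (e ∙ z) = e ∙ z. Proof. by rewrite -mulA ee. Qed.
Lemma idemKr z : z ∙ e ∙ e = z ∙ e. Proof. by rewrite mulA ee. Qed.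

(* The Peirce corner (1 - e) J (1 - e), in an algebra without unit. *)
Definition corner := (J :&: lker (lmul e) :&: lker (rmul e))%VS.

Lemma cornerP x : reflect [/\ x \in J, e ∙ x = 0 & x ∙ e = 0] (x \in corner).
Proof.
rewrite !memv_cap !memv_ker lmulE rmulE -andbA.
by apply: (iffP and3P) => -[Jx /eqP ex0 /eqP xe0]; split=> //; apply/eqP.
Qed.

Lemma corner_mul c c' : c \in corner -> c' \in corner -> c ∙ c' \in corner.
Proof.
case/cornerP => Jc ec0 _ /cornerP [Jc' _ c'e0]; apply/cornerP; split.
- exact/ideal_mull/Jc'/ideal_sub.
- by rewrite -mulA ec0 amul0l.
- by rewrite mulA c'e0 amul0r.
Qed.

Lemma corner_rmul_neq0 u : u \in corner -> u != 0 -> (rmul u @: corner)%VS != 0%VS.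
Proof.
case/cornerP=> Ju eu0 ue0; apply: contra_neq => Cu0.
have Cu c : c \in corner -> c ∙ u = 0.
  by move=> Cc; apply/eqP; rewrite -memv0 -Cu0 -rmulE memv_img.
apply: sandwich0 => [||x Ux]; first exact: ideal_sub.
  by apply/Cu/cornerP.
have Jux : u ∙ x \in J by exact: ideal_mulr.
have Cc : u ∙ x - u ∙ x ∙ e \in corner.
  apply/cornerP; split.
  - by rewrite memvB // ideal_mulr ?ideal_sub.
  - by rewrite amulBr -!mulA eu0 !amul0l subrr.
  - by rewrite amulBl idemKr subrr.
by have := Cu _ Cc; rewrite amulBl [u ∙ x ∙ e ∙ u]mulA eu0 amul0r subr0.
Qed.

Lemma corner_idempotent : corner != 0%VS ->
  exists2 f, f \in corner & f ∙ f = f /\ f != 0.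
Proof.
move=> C0; suff idem_rmul n u : u \in corner -> u != 0 ->
    (\dim (rmul u @: corner) <= n)%N -> exists2 f, f \in corner & f ∙ f = f /\ f != 0.
  by apply: (idem_rmul _ (vpick corner)); rewrite ?memv_pick ?vpick0.
elim: n u => [|n IH] u Cu u0 dimCu.
  by move: (corner_rmul_neq0 Cu u0); rewrite -dimv_eq0 -leqn0 dimCu.
have : vpick (rmul u @: corner) != 0 by rewrite vpick0 corner_rmul_neq0.
have /memv_imgP [s Cs ->] := memv_pick (rmul u @: corner); rewrite rmulE => su0.
have Csu : s ∙ u \in corner by exact: corner_mul.
have sub : (rmul (s ∙ u) @: corner <= rmul u @: corner)%VS.
  apply/subvP => _ /memv_imgP [c Cc ->].
  by rewrite rmulE -mulA -rmulE memv_img // corner_mul.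
have [E|ne] := eqVneq (rmul (s ∙ u) @: corner)%VS (rmul u @: corner)%VS.
  have : s ∙ u \in (rmul (s ∙ u) @: corner)%VS by rewrite E -rmulE memv_img.
  case/memv_imgP => t Ct; rewrite rmulE => sut.
  exact: idempotent_of_fixpoint corner_mul Ct (esym sut) su0.
apply: IH Csu su0 _; move: ne; rewrite -(ltn_leqif (dimv_leqif_eq sub)); lia.
Qed.

Hypothesis corner0 : corner = 0%VS.

Lemma corner0_rfix y : y \in J -> e ∙ y = 0 -> y ∙ e = y.
Proof.
move=> Jy ey0; apply/esym/eqP; rewrite -subr_eq0 -memv0 -corner0; apply/cornerP.
split; first by rewrite memvB ?ideal_mulr ?ideal_sub.
  by rewrite amulBr ey0 -mulA ey0 amul0l subrr.
by rewrite amulBl idemKr subrr.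
Qed.

Lemma corner0_lfix y : y \in J -> y ∙ e = 0 -> e ∙ y = y.
Proof.
move=> Jy ye0; apply/esym/eqP; rewrite -subr_eq0 -memv0 -corner0; apply/cornerP.
split; first by rewrite memvB ?ideal_mull ?ideal_sub.
  by rewrite amulBr idemKl subrr.
by rewrite amulBl ye0 mulA ye0 amul0r subrr.
Qed.

Lemma corner0_rmul j : j \in J -> j ∙ e = e ∙ (j ∙ e).
Proof.
move=> Jj; pose a := j ∙ e - e ∙ (j ∙ e).
have ea0 : e ∙ a = 0 by rewrite amulBr idemKl subrr.
have aeK : a ∙ e = a by rewrite amulBl idemKr mulA idemKr.
suff : a = 0 by move/eqP; rewrite subr_eq0 => /eqP.
apply: sandwich0 => [|| x Ux].
- by rewrite memvB ?mulU ?ideal_sub ?ideal_mulr.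
- by rewrite -{1}aeK mulA ea0 amul0r.
have Jax : a ∙ x \in J by rewrite ideal_mulr // memvB ?ideal_mull ?ideal_mulr ?ideal_sub.
by rewrite -(corner0_rfix Jax) ?mulA ?ea0 ?amul0r // -mulA ea0 amul0l.
Qed.

Lemma corner0_lmul j : j \in J -> e ∙ j = e ∙ j ∙ e.
Proof.
move=> Jj; pose b := e ∙ j - e ∙ j ∙ e.
have be0 : b ∙ e = 0 by rewrite amulBl idemKr subrr.
have ebK : e ∙ b = b by rewrite amulBr idemKl -mulA idemKl.
suff : b = 0 by move/eqP; rewrite subr_eq0 => /eqP.
apply: sandwich0 => [|| x Ux].
- by rewrite memvB ?mulU ?ideal_sub ?ideal_mull.
- by rewrite -{2}ebK -mulA be0 amul0l.
have Jej : e ∙ j \in J by rewrite ideal_mull ?ideal_sub.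
have Jxb : x ∙ b \in J by rewrite ideal_mull // memvB // ideal_mulr ?ideal_sub.
by rewrite mulA -(corner0_lfix Jxb) ?(mulA x) ?be0 ?amul0r // -mulA be0 amul0l.
Qed.

Lemma unit_of_corner0 j : j \in J -> e ∙ j = j /\ j ∙ e = j.
Proof.
move=> Jj; have ej : e ∙ j = j ∙ e by rewrite corner0_rmul // -mulA -corner0_lmul.
have Jc : j - e ∙ j \in J by rewrite memvB ?ideal_mull ?ideal_sub.
have := corner0_rfix Jc; rewrite amulBr idemKl subrr => /(_ erefl).
rewrite amulBl -corner0_lmul // ej subrr => /esym/eqP; rewrite subr_eq0 => /eqP ejj.
by rewrite -ejj.
Qed.

End Corner.

Lemma ideal_unit : exists2 e, e \in J & forall j, j \in J -> e ∙ j = j /\ j ∙ e = j.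
Proof.
pose D := \dim (fullv : {vspace V}).
suff unit_from n e : e \in J -> e ∙ e = e -> (D - \dim (lmul e @: J) < n)%N ->
    exists2 e, e \in J & forall j, j \in J -> e ∙ j = j /\ j ∙ e = j.
  by apply: (unit_from D.+1 0); rewrite ?mem0v ?amul0l //; lia.
(* Each step replaces e by e + f, with f an idempotent of the corner, which
   strictly enlarges e J. *)
elim: n e => // n IH e Je ee dim_e.
have [c0|cn0] := eqVneq (corner e) 0%VS; first by exists e => //; exact: unit_of_corner0.
have [f /cornerP [Jf ef0 fe0] [ff f0]] := corner_idempotent Je ee cn0.
apply: (IH (e + f)); first by rewrite memvD.
  by rewrite amulDl !amulDr ee ef0 fe0 ff addr0 add0r.
have sub : (lmul e @: J <= lmul (e + f) @: J)%VS.
  apply/subvP => _ /memv_imgP [j Jj ->].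
  have -> : lmul e j = (e + f) ∙ (e ∙ j).
    by rewrite lmulE amulDl (idemKl ee) -mulA fe0 amul0l addr0.
  by rewrite -lmulE memv_img // ideal_mull ?ideal_sub.
have ne : (lmul e @: J)%VS != (lmul (e + f) @: J)%VS.
  apply: contraNneq f0 => E.
  have : (e + f) ∙ f \in (lmul (e + f) @: J)%VS by rewrite -lmulE memv_img.
  rewrite amulDl ef0 ff add0r -E => /memv_imgP [j Jj]; rewrite lmulE => fE.
  by rewrite fE -(idemKl ee) -fE ef0.
have := dimvS (subvf (lmul (e + f) @: J)); move: ne.
rewrite -(ltn_leqif (dimv_leqif_eq sub)) -/D; lia.
Qed.

End IdealUnit.

End Semiprime.

(** * Odd-symmetric superalgebras *)

Section OddSymmetric.
Variables (A0 A1 : {vspace V}) (B : V -> V -> K).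
Hypothesis A_direct : directv (A0 + A1).
Hypothesis A_full : (A0 + A1)%VS = fullv.
Hypothesis A_graded : forall (b c : bool) x y,
  x \in homog A0 A1 b -> y \in homog A0 A1 c -> x ∙ y \in homog A0 A1 (b (+) c).
Hypothesis B_odd_sym : odd_symmetric mul A0 A1 B.

Lemma mul00 x y : x \in A0 -> y \in A0 -> x ∙ y \in A0. Proof. exact: (@A_graded false false). Qed.
Lemma mul01 x y : x \in A0 -> y \in A1 -> x ∙ y \in A1. Proof. exact: (@A_graded false true). Qed.
Lemma mul10 x y : x \in A1 -> y \in A0 -> x ∙ y \in A1. Proof. exact: (@A_graded true false). Qed.
Lemma mul11 x y : x \in A1 -> y \in A1 -> x ∙ y \in A0. Proof. exact: (@A_graded true true). Qed.

(* [bilin_form B], read with values in the regular module K^o. *)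
Lemma B_bilin (a : K) x y z :
  (B (a *: x + y) z : K^o) = a *: (B x z : K^o) + B y z /\
  (B z (a *: x + y) : K^o) = a *: (B z x : K^o) + B z y.
Proof. by case: B_odd_sym => /(_ a x y z). Qed.

Lemma B0r z : B z 0 = 0. Proof. exact: (bilin0r B_bilin). Qed.
Lemma BZl a x z : B (a *: x) z = a * B x z. Proof. exact: (bilinZl B_bilin). Qed.
Lemma BZr a x z : B z (a *: x) = a * B z x. Proof. exact: (bilinZr B_bilin). Qed.
Lemma BDl x y z : B (x + y) z = B x z + B y z. Proof. exact: (bilinDl B_bilin). Qed.
Lemma BDr x y z : B z (x + y) = B z x + B z y. Proof. exact: (bilinDr B_bilin). Qed.
Lemma BBr x y z : B z (x - y) = B z x - B z y. Proof. exact: (bilinBr B_bilin). Qed.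

Lemma B_assoc x y z : B (x ∙ y) z = B x (y ∙ z). Proof. by case: B_odd_sym. Qed.
Lemma B_nondeg x : (forall y, B x y = 0) -> x = 0. Proof. by case: B_odd_sym => _ _ _ _; apply. Qed.
Lemma B00 x y : x \in A0 -> y \in A0 -> B x y = 0.
Proof. by case: B_odd_sym => _ [+ _] _ _ _; apply. Qed.
Lemma B11 x y : x \in A1 -> y \in A1 -> B x y = 0.
Proof. by case: B_odd_sym => _ [_ +] _ _ _; apply. Qed.

Lemma B01 x y : x \in A0 -> y \in A1 -> B x y = B y x.
Proof. by case: B_odd_sym => _ _ Bsym _ _ Ax Ay; rewrite (Bsym false true x y) // mul1r. Qed.

Definition pi0 : 'End(V) := daddv_pi A0 A1.
Definition pi1 : 'End(V) := daddv_pi A1 A0.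

Lemma capA01 : (A0 :&: A1 = 0)%VS. Proof. exact/directv_addP. Qed.

Lemma pi0_add_pi1 v : pi0 v + pi1 v = v.
Proof. by rewrite daddv_pi_add ?capA01 // A_full memvf. Qed.

Lemma memv_pi0 v : pi0 v \in A0. Proof. exact: memv_pi. Qed.
Lemma memv_pi1 v : pi1 v \in A1. Proof. exact: memv_pi. Qed.

Lemma pi0_id x : x \in A0 -> pi0 x = x. Proof. by move=> Ax; rewrite daddv_pi_id ?capA01. Qed.
Lemma pi1_id x : x \in A1 -> pi1 x = x.
Proof. by move=> Ax; rewrite daddv_pi_id // capvC capA01. Qed.
Lemma pi1_even x : x \in A0 -> pi1 x = 0.
Proof. by move=> Ax; apply: (addrI (pi0 x)); rewrite pi0_add_pi1 addr0 pi0_id. Qed.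
Lemma pi0_odd x : x \in A1 -> pi0 x = 0.
Proof. by move=> Ax; apply: (addIr (pi1 x)); rewrite pi0_add_pi1 add0r pi1_id. Qed.

Lemma B_sym x y : B x y = B y x.
Proof.
rewrite -(pi0_add_pi1 x) -(pi0_add_pi1 y) !(BDl, BDr).
rewrite !(B00 (memv_pi0 _) (memv_pi0 _)) !(B11 (memv_pi1 _) (memv_pi1 _)).
rewrite !(B01 (memv_pi0 _) (memv_pi1 _)).
by rewrite !add0r !addr0 addrC.
Qed.

Lemma B_evenl x y : x \in A0 -> B x y = B x (pi1 y).
Proof. by move=> Ax; rewrite -{1}(pi0_add_pi1 y) BDr (B00 Ax (memv_pi0 y)) add0r. Qed.

Lemma B_oddl x y : x \in A1 -> B x y = B x (pi0 y).
Proof. by move=> Ax; rewrite -{1}(pi0_add_pi1 y) BDr (B11 Ax (memv_pi1 y)) addr0. Qed.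

Lemma even_orth_odd0 x : x \in A0 -> (forall a, a \in A1 -> B x a = 0) -> x = 0.
Proof. by move=> Ax xA1; apply: B_nondeg => y; rewrite B_evenl ?xA1 ?memv_pi1. Qed.

Lemma odd_orth_even0 a : a \in A1 -> (forall x, x \in A0 -> B a x = 0) -> a = 0.
Proof. by move=> Aa aA0; apply: B_nondeg => y; rewrite B_oddl ?aA0 ?memv_pi0. Qed.

Definition Bform (x : V) : 'Hom(V, K^o) := linfun (B x : V -> K^o).

Lemma BformE x y : Bform x y = B x y.
Proof. exact/lfunE_linear/(bilin_linr B_bilin). Qed.

Definition pairing_row (Y : {vspace V}) : 'Hom(V, 'rV[K]_(\dim Y)) :=
  linfun (fun x => \row_(i < \dim Y) B x (vbasis Y)`_i).

Lemma pairing_rowE Y x i : pairing_row Y x 0 i = B x (vbasis Y)`_i.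
Proof.
rewrite lfunE_linear ?mxE // => a u v; apply/rowP => j.
by rewrite !mxE BDl BZl.
Qed.

Definition orthv (Y : {vspace V}) : {vspace V} := lker (pairing_row Y).

Lemma memv_orthv (Y : {vspace V}) x : reflect (forall y, y \in Y -> B x y = 0) (x \in orthv Y).
Proof.
rewrite memv_ker; apply: (iffP eqP) => [x0 y /coord_vbasis -> | xY].
  rewrite -BformE linear_sum big1 // => i _.
  by rewrite linearZ /= BformE -pairing_rowE x0 mxE [_ *: _]mulr0.
apply/rowP => i; rewrite pairing_rowE mxE.
by rewrite xY // vbasis_mem // mem_nth // size_tuple.
Qed.

Lemma dimv_leq_orthv (X Y : {vspace V}) : (X :&: orthv Y = 0)%VS -> (\dim X <= \dim Y)%N.
Proof.
move=> XY0; rewrite -(limg_dim_eq XY0); apply: leq_trans (dimvS (subvf _)) _.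
by rewrite dimvf dim_matrix mul1r.
Qed.

Lemma graded_pi (I : {vspace V}) v : I = (I :&: A0 + I :&: A1)%VS -> v \in I ->
  pi0 v \in I /\ pi1 v \in I.
Proof.
move=> I_graded; rewrite {1}I_graded => /memv_addP [x + [y + ->]].
rewrite !memv_cap => /andP [Ix Ax] /andP [Iy Ay].
by rewrite !linearD /= pi0_id // pi0_odd // pi1_even // pi1_id // addr0 add0r.
Qed.

Lemma orthv_graded (I : {vspace V}) r : I = (I :&: A0 + I :&: A1)%VS -> r \in orthv I ->
  pi0 r \in orthv I /\ pi1 r \in orthv I.
Proof.
move=> I_graded /memv_orthv rI; split; apply/memv_orthv => y Iy;
  have [Iy0 Iy1] := graded_pi I_graded Iy.
  rewrite B_evenl ?memv_pi0 // -(rI _ Iy1) B_sym [RHS]B_sym [RHS]B_oddl ?memv_pi1 //.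
rewrite B_oddl ?memv_pi1 // -(rI _ Iy0) B_sym [RHS]B_sym [RHS]B_evenl ?memv_pi0 //.
Qed.

Definition radv (I : {vspace V}) : {vspace V} := (I :&: orthv I)%VS.

Lemma radv_ideal (I : {vspace V}) : (forall x y, y \in I -> x ∙ y \in I /\ y ∙ x \in I) ->
  forall v r, r \in radv I -> v ∙ r \in radv I /\ r ∙ v \in radv I.
Proof.
move=> I_ideal v r /memv_capP [Ir /memv_orthv rI]; have [Ivr Irv] := I_ideal v r Ir.
rewrite !memv_cap Ivr Irv; split; apply/memv_orthv => y Iy.
  by rewrite B_sym -B_assoc B_sym rI ?(I_ideal v y Iy).2.
by rewrite B_assoc rI ?(I_ideal v y Iy).1.
Qed.

Lemma radv_sq0 (I : {vspace V}) : (forall x y, y \in I -> x ∙ y \in I /\ y ∙ x \in I) ->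
  forall r s, r \in radv I -> s \in radv I -> r ∙ s = 0.
Proof.
move=> I_ideal r s /memv_capP [_ /memv_orthv rI] Rs; apply: B_nondeg => z.
by rewrite B_assoc rI //; case/memv_capP: (radv_ideal I_ideal z Rs).2.
Qed.

Lemma radv0_nondeg (I : {vspace V}) : radv I = 0%VS -> nondeg_on B I.
Proof.
move=> R0 x Ix xI; apply/eqP; rewrite -memv0 -R0 memv_cap Ix.
exact/memv_orthv.
Qed.

Local Notation W := (subvs_of A0).

Definition sub_mul (u v : W) : W := vsproj A0 (vsval u ∙ vsval v).

Lemma sub_mulE u v : vsval (sub_mul u v) = vsval u ∙ vsval v.
Proof. by rewrite vsprojK // mul00 ?subvsP. Qed.

Lemma sub_mul_bilin : bilin_map sub_mul.
Proof.
move=> a u v w; split; apply: subvs_inj;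
  by rewrite linearD linearZ /= !sub_mulE linearD linearZ /= ?(amulDl, amulZl, amulDr, amulZr).
Qed.

(* The isomorphism v |-> (v0, B(-, v1)) onto A0 (+) P(A0^* ). *)
Definition odd_dual (v : V) : 'Hom(W, K^o) :=
  linfun (fun w : W => B (vsval w) (pi1 v) : K^o).

Lemma odd_dualE v w : odd_dual v w = B (vsval w) (pi1 v).
Proof. by apply: lfunE_linear => a u u'; rewrite linearD linearZ /= BDl BZl. Qed.

Definition sd_iso : 'Hom(V, (W * 'Hom(W, K^o))%type) :=
  linfun (fun v => (vsproj A0 (pi0 v), odd_dual v)).

Lemma sd_isoE v : sd_iso v = (vsproj A0 (pi0 v), odd_dual v).
Proof.
apply: lfunE_linear => a u u'; rewrite !linearD !linearZ /=; congr pair.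
by apply/lfunP => w; rewrite add_lfunE scale_lfunE !odd_dualE linearD linearZ /= BDr BZr.
Qed.

Lemma sd_iso_ker : lker sd_iso = 0%VS.
Proof.
apply/eqP; rewrite -subv0; apply/subvP => v; rewrite memv_ker memv0 sd_isoE.
case/eqP => /(congr1 vsval); rewrite vsprojK ?memv_pi0 // linear0 => pi0v.
move/lfunP => pi1v; rewrite -(pi0_add_pi1 v) pi0v add0r; apply/eqP.
apply: odd_orth_even0 => [|x Ax]; first exact: memv_pi1.
by have := pi1v (vsproj A0 x); rewrite odd_dualE zero_lfunE vsprojK // B_sym.
Qed.

Lemma sd_iso_bij : bijective sd_iso.
Proof.
have A0A1 : (A0 :&: orthv A1 = 0)%VS.
  apply/eqP; rewrite -subv0; apply/subvP => x /memv_capP [Ax /memv_orthv xA1].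
  by rewrite memv0; apply/eqP/even_orth_odd0.
have sd_iso_onto : limg sd_iso = fullv.
  apply/eqP; rewrite eqEdim subvf /= dimvf limg_dim_eq; last by rewrite sd_iso_ker capv0.
  rewrite -A_full dimv_disjoint_sum ?capA01 //.
  by change (\dim A0 + \dim A0 * 1 <= \dim A0 + \dim A1)%N; rewrite muln1 leq_add2l dimv_leq_orthv.
exists (sd_iso^-1)%VF; first exact/lker0_lfunK/eqP/sd_iso_ker.
by move=> y; apply: limg_lfunVK; rewrite sd_iso_onto memvf.
Qed.

Lemma sd_iso_mul : (forall a b, a \in A1 -> b \in A1 -> a ∙ b = 0) ->
  forall x y, sd_iso (x ∙ y) = sd_mul sub_mul (sd_iso x) (sd_iso y).
Proof.
move=> A11 x y; move: (memv_pi0 x) (memv_pi1 x) (memv_pi0 y) (memv_pi1 y) => Ax0 Ax1 Ay0 Ay1.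
have xyE : x ∙ y = pi0 x ∙ pi0 y + (pi0 x ∙ pi1 y + pi1 x ∙ pi0 y).
  rewrite -{1}(pi0_add_pi1 x) -{1}(pi0_add_pi1 y) !amulDl !amulDr (A11 _ _ Ax1 Ay1).
  by rewrite addr0 addrA.
have Axy1 : pi0 x ∙ pi1 y + pi1 x ∙ pi0 y \in A1.
  by apply: memvD; [exact: mul01 | exact: mul10].
have Axy0 : pi0 x ∙ pi0 y \in A0 by exact: mul00.
have pi0_xy : pi0 (x ∙ y) = pi0 x ∙ pi0 y.
  by rewrite xyE linearD /= (pi0_id Axy0) (pi0_odd Axy1) addr0.
have pi1_xy : pi1 (x ∙ y) = pi0 x ∙ pi1 y + pi1 x ∙ pi0 y.
  by rewrite xyE linearD /= (pi1_even Axy0) (pi1_id Axy1) add0r.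
rewrite !sd_isoE /sd_mul /=; congr pair.
  by apply: subvs_inj; rewrite sub_mulE !vsprojK ?pi0_xy.
apply/lfunP => w; rewrite odd_dualE lfunE_linear; last first.
  move=> k u u'; rewrite (sub_mul_bilin k u u' _).1 (sub_mul_bilin k u u' _).2.
  by rewrite !linearD !linearZ /= addrACA.
rewrite !odd_dualE !sub_mulE !vsprojK // pi1_xy BDr -B_assoc; congr (_ + _).
by rewrite B_sym B_assoc B_sym.
Qed.

Section Irreducible.
Hypothesis A0_semisimple : semisimple_sub mul A0.
Hypothesis B_irr : B_irreducible mul A0 A1 B.

Lemma A0_ideal : ideal_in mul A0 A0.
Proof. by split=> // x y Ax Ay; rewrite !mul00. Qed.

Lemma central_idempotent_trivial e : e \in A0 -> e ∙ e = e -> (forall v, e ∙ v = v ∙ e) ->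
  e = 0 \/ forall v, e ∙ v = v.
Proof.
move=> Ae ee e_central; pose eV := limg (lmul e).
have eVP x : reflect (exists v, x = e ∙ v) (x \in eV).
  apply: (iffP idP) => [/memv_imgP [v _ ->]|[v ->]]; first by exists v; rewrite lmulE.
  by rewrite -lmulE memv_img ?memvf.
have eeK v : e ∙ (e ∙ v) = e ∙ v by rewrite -mulA ee.
have eV_graded : graded_ideal mul A0 A1 eV.
  split=> [|x _ /eVP [v ->]]; last first.
    split; apply/eVP; first by exists (x ∙ v); rewrite -mulA -e_central mulA.
    by exists (v ∙ x); rewrite mulA.
  apply/eqP; rewrite eqEsubv subv_add !capvSl !andbT; apply/subvP => _ /eVP [v ->].
  rewrite -(pi0_add_pi1 v) amulDr; apply: memv_add;
    rewrite memv_cap ?mul00 ?mul01 ?memv_pi0 ?memv_pi1 // andbT; apply/eVP; eexists; reflexivity.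
have eV_nondeg : nondeg_on B eV.
  move=> _ /eVP [v ->] v_orth; apply: B_nondeg => z.
  rewrite -(subrK (e ∙ z) z) BDr (v_orth (e ∙ z)); last by apply/eVP; exists z.
  by rewrite addr0 e_central B_assoc amulBr eeK subrr B0r.
case: (B_irr eV_graded eV_nondeg) => [eV0|eVfull]; [left | right => v].
  by apply/eqP; rewrite -memv0 -eV0 -ee; apply/eVP; exists e.
have /eVP [w ->] : v \in eV by rewrite eVfull memvf.
exact: eeK.
Qed.

Lemma A0_simple J : ideal_in mul A0 J -> J = 0%VS \/ J = A0.
Proof.
move=> J_ideal; have [e Je eJ] := ideal_unit A0_semisimple J_ideal.
have Ae := ideal_sub J_ideal Je.
have e_central0 x : x \in A0 -> e ∙ x = x ∙ e.
  move=> Ax; rewrite -{1}(eJ _ (ideal_mulr J_ideal Ax Je)).2 mulA.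
  exact: (eJ _ (ideal_mull J_ideal Ax Je)).1.
have e_central1 a : a \in A1 -> e ∙ a = a ∙ e.
  move=> Aa; apply/eqP; rewrite -subr_eq0; apply/eqP; apply: odd_orth_even0 => [|x Ax].
    by apply: memvB; [exact: mul01 | exact: mul10].
  by rewrite B_sym BBr -!B_assoc -e_central0 // B_assoc [B (x ∙ a) e]B_sym subrr.
have e_central v : e ∙ v = v ∙ e.
  by rewrite -(pi0_add_pi1 v) amulDr amulDl e_central0 ?memv_pi0 // e_central1 ?memv_pi1.
have [e0|e_unit] := central_idempotent_trivial Ae (eJ e Je).1 e_central; [left | right].
  by apply/eqP; rewrite -subv0; apply/subvP => j Jj; rewrite -(eJ j Jj).1 e0 amul0l mem0v.
apply/subv_anti/andP; split; first exact: J_ideal.1.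
apply/subvP => x Ax.
by rewrite -(e_unit x) (ideal_mulr J_ideal Ax Je).
Qed.

Lemma A0_unit : (fullv : {vspace V}) != 0%VS ->
  exists e, [/\ e \in A0, e != 0 & forall x, x \in A0 -> e ∙ x = x /\ x ∙ e = x].
Proof.
move=> V0; have [e Ae eA] := ideal_unit A0_semisimple A0_ideal.
exists e; split=> //; apply: contraNneq V0 => e0.
have A00 x : x \in A0 -> x = 0 by move=> Ax; rewrite -(eA x Ax).1 e0 amul0l.
rewrite -subv0; apply/subvP => v _; rewrite memv0; apply/eqP/B_nondeg => y.
have pi00 z : pi0 z = 0 by apply/A00/memv_pi0.
by rewrite -(pi0_add_pi1 v) -(pi0_add_pi1 y) !pi00 !add0r B11 ?memv_pi1.
Qed.

Lemma odd_ideal_annihilates (R : {vspace V}) :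
  (forall v r, r \in R -> v ∙ r \in R /\ r ∙ v \in R) -> (R <= A1)%VS -> R != 0%VS ->
  forall a b, a \in A1 -> b \in A1 -> a ∙ b = 0.
Proof.
move=> R_ideal sRA1 R0 a b Aa Ab.
have A1R0 v r : v \in A1 -> r \in R -> v ∙ r = 0.
  move=> Av Rr; have Ar := subvP sRA1 r Rr.
  by apply/eqP; rewrite -memv0 -capA01 memv_cap mul11 // (subvP sRA1) // (R_ideal v r Rr).1.
pose M := (A0 :&: orthv R)%VS.
have M_ideal : ideal_in mul A0 M.
  split=> [|x m Ax]; first exact: capvSl.
  rewrite memv_cap => /andP [Am /memv_orthv mR].
  rewrite !memv_cap !mul00 //=; split; apply/memv_orthv => r Rr.
    by rewrite B_sym -B_assoc B_sym mR ?(R_ideal x r Rr).2.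
  by rewrite B_assoc mR ?(R_ideal x r Rr).1.
have [M0|MA0] := A0_simple M_ideal.
  apply/eqP; rewrite -memv0 -M0 memv_cap mul11 //=.
  by apply/memv_orthv => r Rr; rewrite B_assoc A1R0 ?B0r.
suff : vpick R = 0 by move/eqP; rewrite vpick0 (negbTE R0).
apply: odd_orth_even0 => [|x Ax]; first by rewrite (subvP sRA1) ?memv_pick.
have : x \in M by rewrite MA0.
by rewrite memv_cap => /andP [_ /memv_orthv xR]; rewrite B_sym xR ?memv_pick.
Qed.

Lemma radv_odd (I : {vspace V}) : graded_ideal mul A0 A1 I -> (radv I <= A1)%VS.
Proof.
case=> I_graded I_ideal.
have RA00 : (radv I :&: A0 = 0)%VS.
  apply: (sq0_ideal0 A0_semisimple) => [|x y].
    split=> [|x y Ax]; first exact: capvSr.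
    case/memv_capP => Ry Ay; have [Rxy Ryx] := radv_ideal I_ideal x Ry.
    by split; apply/memv_capP; split; rewrite ?mul00.
  by move=> /memv_capP [Rx _] /memv_capP [Ry _]; exact: radv_sq0 I_ideal _ _ Rx Ry.
apply/subvP => r Rr; have /memv_capP [Ir rO] := Rr.
have : pi0 r \in (radv I :&: A0)%VS.
  by rewrite !memv_cap (graded_pi I_graded Ir).1 (orthv_graded I_graded rO).1 memv_pi0.
by rewrite RA00 memv0 -{2}(pi0_add_pi1 r) => /eqP ->; rewrite add0r memv_pi1.
Qed.

Lemma graded_ideal_trivial a b : a \in A1 -> b \in A1 -> a ∙ b != 0 ->
  forall I, graded_ideal mul A0 A1 I -> I = 0%VS \/ I = fullv.
Proof.
move=> Aa Ab ab0 I I_gr_ideal.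
have [->|I0] := eqVneq I 0%VS; first by left.
have [->|If] := eqVneq I fullv; first by right.
case/eqP: ab0; apply: (odd_ideal_annihilates (radv_ideal I_gr_ideal.2) (radv_odd I_gr_ideal)) => //.
apply/eqP => R0; have := B_irr I_gr_ideal (radv0_nondeg R0).
by case=> /eqP; rewrite ?(negbTE I0) ?(negbTE If).
Qed.

Lemma A11_zero : ~ super_simple mul A0 A1 -> (fullv : {vspace V}) != 0%VS ->
  forall a b, a \in A1 -> b \in A1 -> a ∙ b = 0.
Proof.
move=> not_simple V0 a b Aa Ab; apply/eqP/negPn/negP => ab0; apply: not_simple.
have [e [Ae e0 eA]] := A0_unit V0.
split; last exact: graded_ideal_trivial Aa Ab ab0.
by exists e, e; rewrite (eA e Ae).1.
Qed.

Lemma simple_sub_mul : (fullv : {vspace V}) != 0%VS -> simple_assoc_alg sub_mul.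
Proof.
move=> V0; split.
- exact: sub_mul_bilin.
- by move=> u v w; apply: subvs_inj; rewrite !sub_mulE mulA.
- have [e [Ae e0 eA]] := A0_unit V0; exists (vsproj A0 e), (vsproj A0 e).
  by rewrite -(inj_eq subvs_inj) sub_mulE vsprojK // (eA e Ae).1 linear0.
move=> J [_ J_ideal]; pose J' := (linfun vsval @: J)%VS.
have J'P x : reflect (exists2 j, j \in J & x = vsval j) (x \in J').
  apply: (iffP memv_imgP) => -[j Jj ->]; exists j; rewrite ?lfunE //.
have J'_ideal : ideal_in mul A0 J'.
  split=> [|x _ Ax /J'P [j Jj ->]]; first by apply/subvP => _ /J'P [j _ ->]; exact: subvsP.
  have [Jxj Jjx] := J_ideal (vsproj A0 x) j (memvf _) Jj.
  by split; apply/J'P; [exists (sub_mul (vsproj A0 x) j) | exists (sub_mul j (vsproj A0 x))];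
    rewrite // sub_mulE vsprojK.
have [J'0|J'A0] := A0_simple J'_ideal; [left | right]; apply/vspaceP => w.
  rewrite memv0; apply/idP/eqP => [Jw|->]; last exact: mem0v.
  by apply: subvs_inj; apply/eqP; rewrite linear0 -memv0 -J'0; apply/J'P; exists w.
rewrite memvf; have /J'P [j Jj /subvs_inj -> //] : vsval w \in J' by rewrite J'A0 subvsP.
Qed.

Lemma semidirect_decomposition :
  (fullv : {vspace V}) != 0%VS -> ~ super_simple mul A0 A1 ->
  exists (W : vectType K) (mS : W -> W -> W) (phi : 'Hom(V, (W * 'Hom(W, K^o))%type)),
    [/\ simple_assoc_alg mS,
        bijective phi,
        (forall x : V, x \in A0 -> (phi x).2 = 0),
        (forall x : V, x \in A1 -> (phi x).1 = 0)
      & (forall x y : V, phi (x ∙ y) = sd_mul mS (phi x) (phi y))].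
Proof.
move=> V0 not_simple; exists W, sub_mul, sd_iso; split.
- exact: simple_sub_mul.
- exact: sd_iso_bij.
- by move=> x Ax; apply/lfunP => w; rewrite sd_isoE odd_dualE zero_lfunE pi1_even ?B0r.
- by move=> x Ax; rewrite sd_isoE /= pi0_odd // linear0.
- exact/sd_iso_mul/A11_zero.
Qed.

End Irreducible.

End OddSymmetric.
End Algebra.

Theorem mainTheorem18 (K : closedFieldType) (V : vectType K) (mul : V -> V -> V)
    (A0 A1 : {vspace V}) (B : V -> V -> K) :
  [pchar K] =i pred0 ->
  assoc_superalgebra mul A0 A1 ->
  odd_symmetric mul A0 A1 B ->
  (fullv : {vspace V}) != 0%VS ->
  B_irreducible mul A0 A1 B ->
  ~ super_simple mul A0 A1 ->
  semisimple_sub mul A0 ->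
  exists (W : vectType K) (mS : W -> W -> W) (phi : 'Hom(V, (W * 'Hom(W, K^o))%type)),
    [/\ simple_assoc_alg mS,
        bijective phi,
        (forall x : V, x \in A0 -> (phi x).2 = 0),
        (forall x : V, x \in A1 -> (phi x).1 = 0)
      & (forall x y : V, phi (mul x y) = sd_mul mS (phi x) (phi y))].
Proof.
move=> _ [mul_bilin A_direct A_full A_graded mulA] B_odd_sym V0 B_irr not_simple A0_ss.
exact: (semidirect_decomposition mul_bilin mulA A_direct A_full A_graded B_odd_sym A0_ss B_irr V0
  not_simple).
Qed.
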